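(* Let $R$ be a commutative refinement ring. Then every stably free $R$-module is free.
   Context: A ring $R$ is a refinement ring if the monoid $V(R)$ of isomorphism classes of finitely generated projective $R$-modules (under direct sum) has the refinement property: whenever $x_1+x_2=y_1+y_2$ in $V(R)$, there exist $z_{ij}\in V(R)$ with $x_i=z_{i1}+z_{i2}$ and $y_j=z_{1j}+z_{2j}$. *)

From mathcomp Require Import all_boot all_algebra.
Set Implicit Arguments. Unset Strict Implicit. Unset Printing Implicit Defensive.
Import GRing.Theory.
Local Open Scope ring_scope.

(* Modules over a commutative ring R are MathComp's [lmodType R].
   Direct sum M (+) N is the product module [(M * N)%type];
   the free module R^n is the row-vector module ['rV[R]_n]. *)

Definition is_linmap (R : comPzRingType) (M N : lmodType R) (f : M -> N) : Prop :=
  forall (a : R) (x y : M), f (a *: x + y) = a *: f x + f y.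

Definition mod_iso (R : comPzRingType) (M N : lmodType R) : Prop :=
  exists f : M -> N, is_linmap f /\ bijective f.

Definition fin_gen (R : comPzRingType) (M : lmodType R) : Prop :=
  exists (n : nat) (f : 'rV[R]_n -> M), is_linmap f /\ (forall y : M, exists x, f x = y).

Definition projective (R : comPzRingType) (M : lmodType R) : Prop :=
  forall (A B : lmodType R) (g : A -> B) (h : M -> B),
    is_linmap g -> (forall b : B, exists a, g a = b) -> is_linmap h ->
    exists k : M -> A, is_linmap k /\ (forall x, g (k x) = h x).

Definition fgproj (R : comPzRingType) (M : lmodType R) : Prop :=
  fin_gen M /\ projective M.

(* R is a refinement ring: V(R) (iso classes of f.g. projective modules under
   direct sum) has the refinement property. *)
Definition refinement_ring (R : comPzRingType) : Prop :=
  forall X1 X2 Y1 Y2 : lmodType R,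
    fgproj X1 -> fgproj X2 -> fgproj Y1 -> fgproj Y2 ->
    mod_iso (X1 * X2)%type (Y1 * Y2)%type ->
    exists Z11 Z12 Z21 Z22 : lmodType R,
      [/\ fgproj Z11, fgproj Z12, fgproj Z21 & fgproj Z22] /\
      [/\ mod_iso X1 (Z11 * Z12)%type, mod_iso X2 (Z21 * Z22)%type,
          mod_iso Y1 (Z11 * Z21)%type & mod_iso Y2 (Z12 * Z22)%type].

Definition stably_free (R : comPzRingType) (M : lmodType R) : Prop :=
  exists n m : nat, mod_iso (M * 'rV[R]_n)%type 'rV[R]_m.

(* Free (of finite rank; a stably free module is finitely generated). *)
Definition free_mod (R : comPzRingType) (M : lmodType R) : Prop :=
  exists k : nat, mod_iso M 'rV[R]_k.

(** If M (+) R^(n+1) = R^m, then M (+) R^n is a finitely generated projective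
    module with (M (+) R^n) (+) R = R^(m-1) (+) R, and refinement writes
    M (+) R^n = Z11 (+) Z12, R = Z21 (+) Z22, R^(m-1) = Z11 (+) Z21 and
    R = Z12 (+) Z22.  In a commutative ring, a direct summand A of R with
    complement B is recovered from B as its annihilator, so the two
    decompositions of R force Z21 = Z12, whence M (+) R^n = R^(m-1) (when
    m = 0, M (+) R^n = 0 directly); induction on n concludes. *)
From mathcomp Require Import all_boot all_algebra.
From Stdlib Require Import IndefiniteDescription.
Set Implicit Arguments. Unset Strict Implicit. Unset Printing Implicit Defensive.
Import GRing.Theory.
Local Open Scope ring_scope.

Section LinearMaps.
Variable R : comPzRingType.
Implicit Types A B C M N : lmodType R.

Lemma linmap0 M N (f : M -> N) : is_linmap f -> f 0 = 0.
Proof. by move=> Hf; have := Hf (-1) 0 0; rewrite scaler0 addr0 scaleN1r addNr. Qed.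

Lemma linmapD M N (f : M -> N) : is_linmap f -> forall x y, f (x + y) = f x + f y.
Proof. by move=> Hf x y; have := Hf 1 x y; rewrite !scale1r. Qed.

Lemma linmapZ M N (f : M -> N) : is_linmap f -> forall a x, f (a *: x) = a *: f x.
Proof. by move=> Hf a x; have := Hf a x 0; rewrite addr0 (linmap0 Hf) addr0. Qed.

Lemma linmap_sum M N (f : M -> N) (I : Type) (r : seq I) (F : I -> M) :
  is_linmap f -> f (\sum_(i <- r) F i) = \sum_(i <- r) f (F i).
Proof.
move=> Hf; elim: r => [|i r IHr]; first by rewrite !big_nil (linmap0 Hf).
by rewrite !big_cons (linmapD Hf) IHr.
Qed.

Lemma linmap_comp A B C (f : A -> B) (g : B -> C) :
  is_linmap f -> is_linmap g -> is_linmap (g \o f).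
Proof. by move=> Hf Hg a x y /=; rewrite Hf Hg. Qed.

Lemma linmap_inv M N (f : M -> N) (g : N -> M) :
  is_linmap f -> cancel f g -> cancel g f -> is_linmap g.
Proof. by move=> Hf fK gK a x y; rewrite -{1}(gK x) -{1}(gK y) -Hf fK. Qed.

Lemma linmap_fst M N : is_linmap (@fst M N).
Proof. by []. Qed.

Lemma linmap_inl M N : is_linmap (fun x : M => (x, 0 : N)).
Proof.
move=> a x y.
have -> : a *: ((x, 0) : M * N) + (y, 0) = (a *: x + y, a *: 0 + 0) by [].
by rewrite scaler0 addr0.
Qed.

End LinearMaps.

Section Isomorphisms.
Variable R : comPzRingType.
Implicit Types M N P : lmodType R.

Lemma mod_iso_refl M : mod_iso M M.
Proof. by exists id; split => //; exists id. Qed.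

Lemma mod_iso_sym M N : mod_iso M N -> mod_iso N M.
Proof.
move=> [f [Hf [g fK gK]]]; exists g; split; first exact: linmap_inv Hf fK gK.
by exists f.
Qed.

Lemma mod_iso_trans M N P : mod_iso M N -> mod_iso N P -> mod_iso M P.
Proof.
move=> [f [Hf bf]] [g [Hg bg]]; exists (g \o f); split; first exact: linmap_comp.
exact: bij_comp.
Qed.

Lemma mod_iso_prod M M' N N' :
  mod_iso M M' -> mod_iso N N' -> mod_iso (M * N)%type (M' * N')%type.
Proof.
move=> [f [Hf [f' fK f'K]]] [g [Hg [g' gK g'K]]].
exists (fun p => (f p.1, g p.2)); split.
  by move=> a [x1 x2] [y1 y2] /=; rewrite Hf Hg.
by exists (fun p => (f' p.1, g' p.2)) => -[x y] /=; rewrite ?fK ?gK ?f'K ?g'K.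
Qed.

Lemma mod_iso_prodA M N P : mod_iso (M * (N * P))%type ((M * N) * P)%type.
Proof.
exists (fun p => ((p.1, p.2.1), p.2.2)); split; first by move=> a [? [? ?]] [? [? ?]].
by exists (fun p => (p.1.1, (p.1.2, p.2))); [case=> ? [] | case=> [[]]].
Qed.

Lemma mod_iso_row_mx (a b : nat) : mod_iso 'rV[R]_(a + b) ('rV[R]_a * 'rV[R]_b)%type.
Proof.
exists (fun v => (lsubmx v, rsubmx v)); split.
  by move=> c x y /=; rewrite !linearD !linearZ.
exists (fun p => row_mx p.1 p.2); first by move=> v /=; rewrite hsubmxK.
by move=> [x y] /=; rewrite row_mxKl row_mxKr.
Qed.

Lemma mod_iso_prod_rVS M (n : nat) :
  mod_iso (M * 'rV[R]_n.+1)%type ((M * 'rV[R]_n) * 'rV[R]_1)%type.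
Proof.
apply: mod_iso_trans (mod_iso_prodA _ _ _); apply: mod_iso_prod (mod_iso_refl _) _.
by have := mod_iso_row_mx n 1; rewrite addn1.
Qed.

Lemma mod_iso_prod_rV0 M : mod_iso (M * 'rV[R]_0)%type M.
Proof.
exists fst; split; first exact: linmap_fst.
by exists (fun x => (x, 0)) => // -[x y] /=; rewrite (thinmx0 y).
Qed.

Lemma mod_iso_rV0_fst M N : mod_iso (M * N)%type 'rV[R]_0 -> mod_iso M 'rV[R]_0.
Proof.
move=> [f [Hf [g fK gK]]].
exists (fun _ => 0); split; first by move=> a x y; rewrite scaler0 addr0.
exists (fun _ => 0) => [x|v]; last by rewrite (thinmx0 v).
have := fK (x, 0); have := fK (0, 0).
by rewrite (thinmx0 (f (x, 0))) (thinmx0 (f (0, 0))) => -> [].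
Qed.

End Isomorphisms.

Section Projective.
Variable R : comPzRingType.
Implicit Types M N : lmodType R.

Lemma projective_rV (n : nat) : projective 'rV[R]_n.
Proof.
move=> A B g h Hg g_surj Hh.
pose lift b := proj1_sig (constructive_indefinite_description _ (g_surj b)).
have liftK b : g (lift b) = b by rewrite /lift; case: constructive_indefinite_description.
exists (fun x : 'rV[R]_n => \sum_(i < n) x 0 i *: lift (h 'e_i)); split.
  move=> a x y; under eq_bigr => i _ do rewrite !mxE scalerDl -scalerA.
  by rewrite big_split -scaler_sumr.
move=> x; rewrite (linmap_sum _ _ Hg).
under eq_bigr => i _ do rewrite (linmapZ Hg) liftK -(linmapZ Hh).
by rewrite -(linmap_sum _ _ Hh) -row_sum_delta.
Qed.

Lemma fgproj_rV (n : nat) : fgproj 'rV[R]_n.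
Proof. by split; [exists n, id; split => // y; exists y | exact: projective_rV]. Qed.

Lemma fgproj_retract M N (s : M -> N) (p : N -> M) :
  is_linmap s -> is_linmap p -> cancel s p -> fgproj N -> fgproj M.
Proof.
move=> Hs Hp sK [[n [q [Hq q_surj]]] projN]; split.
  exists n, (p \o q); split; first exact: linmap_comp.
  by move=> x; have [v qv] := q_surj (s x); exists v; rewrite /= qv sK.
move=> A B g h Hg g_surj Hh.
have [k [Hk gk]] := projN _ _ _ _ Hg g_surj (linmap_comp Hp Hh).
by exists (k \o s); split => [|x]; [exact: linmap_comp | rewrite /= gk /= sK].
Qed.

Lemma fgproj_summand_rV M N (m : nat) :
  mod_iso (M * N)%type 'rV[R]_m -> fgproj M.
Proof.
move=> [f [Hf [f' fK f'K]]].
have sK : cancel (f \o (fun x => (x, 0))) (fst \o f') by move=> x /=; rewrite fK.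
apply: (fgproj_retract _ _ sK (fgproj_rV m)).
- by move=> a x y /=; rewrite linmap_inl Hf.
- by move=> a x y /=; rewrite (linmap_inv Hf fK f'K).
Qed.

End Projective.

Section Complements.
Variable R : comPzRingType.
Implicit Types A B C X : lmodType R.

Lemma cancel_fst_transfer X A B C (f : X -> A * B) f' (g : X -> C * B) g' :
  cancel f f' -> cancel f' f -> cancel g g' ->
  (forall x, (f x).2 = 0 -> (g x).2 = 0) ->
  cancel (fun a => (g (f' (a, 0))).1) (fun c => (f (g' (c, 0))).1).
Proof.
move=> fK f'K gK fg0 a; set x := f' (a, 0).
have gx0 : (g x).2 = 0 by apply: fg0; rewrite f'K.
have -> : ((g x).1, 0) = g x by move: gx0; case: (g x) => ? ? /= ->.
by rewrite gK f'K.
Qed.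

Lemma mod_iso_fst_of_snd_kernel X A B C (f : X -> A * B) (g : X -> C * B) :
  is_linmap f -> bijective f -> is_linmap g -> bijective g ->
  (forall x, (f x).2 = 0 <-> (g x).2 = 0) -> mod_iso A C.
Proof.
move=> Hf [f' fK f'K] Hg [g' gK g'K] fg0.
exists (fun a => (g (f' (a, 0))).1); split.
  by move=> c x y /=; rewrite linmap_inl (linmap_inv Hf fK f'K) Hg.
exists (fun c => (f (g' (c, 0))).1).
  by apply: (cancel_fst_transfer fK f'K gK) => x /fg0.
by apply: (cancel_fst_transfer gK g'K fK) => x /fg0.
Qed.

Lemma rV1_scale_const (r : 'rV[R]_1) : r = r 0 0 *: const_mx 1.
Proof. by apply/rowP => i; rewrite !mxE mulr1 (ord1 i). Qed.

Lemma rV1_scaleC (r s : 'rV[R]_1) : r 0 0 *: s = s 0 0 *: r.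
Proof. by apply/rowP => i; rewrite !mxE (ord1 i) mulrC. Qed.

Lemma snd_kernel_rV1 A B (f : 'rV[R]_1 -> A * B) :
  is_linmap f -> bijective f ->
  forall r, (f r).2 = 0 <-> forall b : B, r 0 0 *: b = 0.
Proof.
move=> Hf [f' fK f'K] r; split => [fr0 b | annB]; last first.
  by rewrite (rV1_scale_const r) (linmapZ Hf) /= annB.
set s := f' (0, b).
have /(congr1 snd) : f (r 0 0 *: s) = f (s 0 0 *: r) by rewrite rV1_scaleC.
by rewrite !(linmapZ Hf) f'K /= fr0 !scaler0.
Qed.

Lemma mod_iso_complement_rV1 A B C :
  mod_iso 'rV[R]_1 (A * B)%type -> mod_iso 'rV[R]_1 (C * B)%type -> mod_iso A C.
Proof.
move=> [f [Hf bf]] [g [Hg bg]]; apply: (mod_iso_fst_of_snd_kernel Hf bf Hg bg) => x.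
by rewrite (snd_kernel_rV1 Hf bf) (snd_kernel_rV1 Hg bg).
Qed.

End Complements.

Lemma refinement_cancel_rV1 (R : comPzRingType) (M : lmodType R) (k : nat) :
  refinement_ring R -> fgproj M ->
  mod_iso (M * 'rV[R]_1)%type 'rV[R]_k.+1 -> mod_iso M 'rV[R]_k.
Proof.
move=> refR projM isoM.
have isoMk : mod_iso (M * 'rV[R]_1)%type ('rV[R]_k * 'rV[R]_1)%type.
  by apply: mod_iso_trans isoM _; have := mod_iso_row_mx R k 1; rewrite addn1.
have [Z11 [Z12 [Z21 [Z22 [_ [isoM' isoR isoRk isoR']]]]]] :=
  refR _ _ _ _ projM (fgproj_rV _ 1) (fgproj_rV _ k) (fgproj_rV _ 1) isoMk.
apply: (mod_iso_trans isoM'); apply: mod_iso_sym; apply: (mod_iso_trans isoRk).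
exact: mod_iso_prod (mod_iso_refl _) (mod_iso_complement_rV1 isoR isoR').
Qed.

Theorem corollary2p4 (R : comPzRingType) :
  refinement_ring R -> forall M : lmodType R, stably_free M -> free_mod M.
Proof.
move=> refR M [n [m]]; elim: n M m => [|n IHn] M m isoM.
  by exists m; apply: mod_iso_trans (mod_iso_sym (mod_iso_prod_rV0 M)) isoM.
have isoMn := mod_iso_trans (mod_iso_sym (mod_iso_prod_rVS M n)) isoM.
have projMn := fgproj_summand_rV isoMn.
case: m isoMn {isoM} => [|k] isoMn.
  exact: IHn (mod_iso_rV0_fst isoMn).
exact: IHn (refinement_cancel_rV1 refR projMn isoMn).
Qed.
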